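(* In the setting described in the context, assume $\mathcal{A}$ satisfies the Deep-$\mathfrak{M}$-Null Space Property with constants $\gamma\ge1$, $\rho>0$, and let $\sigma_{\mathfrak{M}}>0$ be a Deep-lower-RIP constant of $\mathcal{A}$ with regard to $\mathfrak{M}$. Let $\overline{\mathcal{S}}\in\mathfrak{M}$, $\overline{\mathbf{h}}\in\mathbb{R}^{S\times K}_{\overline{\mathcal{S}}}$, $\delta\ge0$, and $X=M_1(\overline{\mathbf{h}}_1)\cdots M_K(\overline{\mathbf{h}}_K)+e$ with $\|e\|\le\delta$. Let $\mathcal{S}^*\in\mathfrak{M}$ and $\mathbf{h}^*\in\mathbb{R}^{S\times K}_{\mathcal{S}^*}$, and set $\eta=\|M_1(\mathbf{h}^*_1)\cdots M_K(\mathbf{h}^*_K)-X\|$. If $\eta+\delta\le\rho$, then $$\|P(\mathbf{h}^* )-P(\overline{\mathbf{h}})\|\le\frac{\gamma}{\sigma_{\mathfrak{M}}}(\delta+\eta).$$ Moreover, if $\frac{\gamma}{\sigma_{\mathfrak{M}}}(\delta+\eta)\le\frac12\max\left(\|P(\mathbf{h}^* )\|_\infty,\|P(\overline{\mathbf{h}})\|_\infty\right)$, then for every $p\in[1,\infty]$, $$d_p([\mathbf{h}^*],[\overline{\mathbf{h}}])\le 7(KS)^{\frac1p}\min\left(\|P(\overline{\mathbf{h}})\|_\infty^{\frac1K-1},\|P(\mathbf{h}^* )\|_\infty^{\frac1K-1}\right)\frac{\gamma}{\sigma_{\mathfrak{M}}}(\delta+\eta).$$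
   Context: Let $K,S\ge 1$ and $m_1,\dots,m_{K+1}$ be positive integers, $\mathbb{N}_S=\{1,\dots,S\}$, and for $k=1,\dots,K$ let $M_k:\mathbb{R}^S\to\mathbb{R}^{m_k\times m_{k+1}}$ be linear. Parameters are $\mathbf{h}=(\mathbf{h}_1,\dots,\mathbf{h}_K)\in\mathbb{R}^{S\times K}$, $\mathbf{h}_k\in\mathbb{R}^S$ with entries $\mathbf{h}_{k,i}$. $\mathbb{R}^{S^K}$ is the space of real order-$K$ tensors with all axes of size $S$, indexed by $\mathbf{i}\in\mathbb{N}_S^K$; $\|\cdot\|$ is the Euclidean norm and $\|\cdot\|_p$ the entrywise $\ell^p$ norm (for vectors, tensors and parameters alike). Segre embedding: $P(\mathbf{h})_{\mathbf{i}}=\mathbf{h}_{1,\mathbf{i}_1}\cdots\mathbf{h}_{K,\mathbf{i}_K}$. The lifting operator $\mathcal{A}:\mathbb{R}^{S^K}\to\mathbb{R}^{m_1\times m_{K+1}}$ is the unique linear map with $\mathcal{A}P(\mathbf{h})=M_1(\mathbf{h}_1)\cdots M_K(\mathbf{h}_K)$ for all $\mathbf{h}$; matrices carry the Frobenius norm. A support is $\mathcal{S}=(\mathcal{S}_1,\dots,\mathcal{S}_K)$, $\mathcal{S}_k\subset\mathbb{N}_S$; unions are componentwise; $\mathbf{i}\in\mathcal{S}$ means $\mathbf{i}_k\in\mathcal{S}_k$ for all $k$. $\mathbb{R}^{S\times K}_{\mathcal{S}}=\{\mathbf{h}:\mathbf{h}_{k,i}=0\text{ whenever }i\notin\mathcal{S}_k\}$,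 $\mathbb{T}_{\mathcal{S}}=\{T: T_{\mathbf{i}}=0\text{ whenever }\mathbf{i}\notin\mathcal{S}\}$, $P_{\mathcal{S}}$ the orthogonal projection onto $\mathbb{T}_{\mathcal{S}}$, and $\mathcal{A}_{\mathcal{S}}=\mathcal{A}P_{\mathcal{S}}$. $\mathfrak{M}$ is a given finite family of supports. Deep-$\mathfrak{M}$-Null Space Property with constants $(\gamma,\rho)$, $\gamma\ge1,\rho>0$: for all $\mathcal{S},\mathcal{S}'\in\mathfrak{M}$, every $T\in P(\mathbb{R}^{S\times K}_{\mathcal{S}})+P(\mathbb{R}^{S\times K}_{\mathcal{S}'})$ with $\|\mathcal{A}_{\mathcal{S}\cup\mathcal{S}'}T\|\le\rho$ and every $T'\in\ker\mathcal{A}_{\mathcal{S}\cup\mathcal{S}'}$ satisfy $\|T\|\le\gamma\|T-P_{\mathcal{S}\cup\mathcal{S}'}T'\|$. Deep-lower-RIP constant: a number $\sigma_{\mathfrak{M}}>0$ such that for all $\mathcal{S},\mathcal{S}'\in\mathfrak{M}$ and all $T$ in the orthogonal complement of $\ker\mathcal{A}_{\mathcal{S}\cup\mathcal{S}'}$, $\sigma_{\mathfrak{M}}\|P_{\mathcal{S}\cup\mathcal{S}'}T\|\le\|\mathcal{A}_{\mathcal{S}\cup\mathcal{S}'}T\|$. Metric $d_p$: let $\mathbb{R}^{S\times K}_*=\{\mathbf{h}:\mathbf{h}_k\ne0\ \forall k\}$; $\mathbf{h}\sim\mathbf{g}$ iff there are $\lambda_1,\dots,\lambda_K\in\mathbb{R}$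 with $\prod_k\lambda_k=1$ and $\mathbf{h}_k=\lambda_k\mathbf{g}_k$ for all $k$; $[\mathbf{h}]$ is the class of $\mathbf{h}$. With $\mathbb{R}^{S\times K}_{diag}=\{\mathbf{h}\in\mathbb{R}^{S\times K}_*:\|\mathbf{h}_k\|_\infty=\|\mathbf{h}_1\|_\infty\ \forall k\}$, define for $\mathbf{h},\mathbf{g}\in\mathbb{R}^{S\times K}_*$: $d_p([\mathbf{h}],[\mathbf{g}])=\inf\{\|\mathbf{h}'-\mathbf{g}'\|_p:\mathbf{h}'\in[\mathbf{h}]\cap\mathbb{R}^{S\times K}_{diag},\ \mathbf{g}'\in[\mathbf{g}]\cap\mathbb{R}^{S\times K}_{diag}\}$. *)

From HB Require Import structures.
From mathcomp Require Import all_boot all_order all_algebra.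
From mathcomp Require Import all_classical all_reals all_analysis.
Set Implicit Arguments. Unset Strict Implicit. Unset Printing Implicit Defensive.
Import Order.TTheory GRing.Theory Num.Theory.
Local Open Scope ring_scope.
Local Open Scope classical_set_scope.

(* Conventions: the K layers are indexed 0..K-1 (paper: 1..K); the matrix
   dimensions m_1..m_{K+1} of the paper are m 0 .. m K.
   Parameters h in R^{S x K} are matrices 'M_(S,K): h i k = h_{k,i},
   the column k is h_k.
   Tensors in R^{S^K} are finite functions on multi-indices 'I_K -> 'I_S.
   Supports are K-tuples of subsets of 'I_S. *)

Section Defs.
Variable R : realType.

Definition frob {p q : nat} (A : 'M[R]_(p, q)) : R :=
  Num.sqrt (\sum_i \sum_j A i j ^+ 2).

Definition supnorm (I : finType) (f : I -> R) : R := \big[Num.max/0]_i `|f i|.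

Definition lpnorm (I : finType) (p : \bar R) (f : I -> R) : R :=
  match p with
  | EFin q => (\sum_i `|f i| `^ q) `^ q^-1
  | +oo%E => supnorm f
  | -oo%E => 0
  end.

Definition root_factor (p : \bar R) (n : nat) : R :=
  match p with
  | EFin q => n%:R `^ q^-1
  | _ => 1
  end.

Variables K S : nat.

Definition tnorm (T : {ffun {ffun 'I_K -> 'I_S} -> R}) : R :=
  Num.sqrt (\sum_i T i ^+ 2).
Definition tdot (T U : {ffun {ffun 'I_K -> 'I_S} -> R}) : R :=
  \sum_i T i * U i.

Definition segre (h : 'M[R]_(S, K)) : {ffun {ffun 'I_K -> 'I_S} -> R} :=
  [ffun i : {ffun 'I_K -> 'I_S} => \prod_(k : 'I_K) h (i k) k].

(* column k of h, for a natural number k (zero if k >= K; only used for k < K) *)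
Definition hcol (h : 'M[R]_(S, K)) (k : nat) : 'cV[R]_S :=
  \col_i oapp (fun k' : 'I_K => h i k') 0 (insub k).

Fixpoint prodM (m : nat -> nat) (M : forall k : nat, 'cV[R]_S -> 'M[R]_(m k, m k.+1))
  (h : 'M[R]_(S, K)) (n : nat) : 'M[R]_(m 0%N, m n) :=
  match n return 'M[R]_(m 0%N, m n) with
  | 0%N => 1%:M
  | n'.+1 => prodM M h n' *m M n' (hcol h n')
  end.

Definition supU (A B : {ffun 'I_K -> {set 'I_S}}) : {ffun 'I_K -> {set 'I_S}} :=
  [ffun k => A k :|: B k].
Definition in_supp (i : {ffun 'I_K -> 'I_S}) (A : {ffun 'I_K -> {set 'I_S}}) : bool :=
  [forall k, i k \in A k].
Definition param_on (A : {ffun 'I_K -> {set 'I_S}}) (h : 'M[R]_(S, K)) : Prop :=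
  forall i k, i \notin A k -> h i k = 0.
Definition projS (A : {ffun 'I_K -> {set 'I_S}}) (T : {ffun {ffun 'I_K -> 'I_S} -> R}) :
  {ffun {ffun 'I_K -> 'I_S} -> R} :=
  [ffun i : {ffun 'I_K -> 'I_S} => if in_supp i A then T i else 0].

Variables (mr mc : nat).
Definition AS (A : {ffun {ffun 'I_K -> 'I_S} -> R} -> 'M[R]_(mr, mc))
  (Sp : {ffun 'I_K -> {set 'I_S}}) (T : {ffun {ffun 'I_K -> 'I_S} -> R}) : 'M[R]_(mr, mc) :=
  A (projS Sp T).

Definition deepNSP (Mfam : {set {ffun 'I_K -> {set 'I_S}}})
  (A : {ffun {ffun 'I_K -> 'I_S} -> R} -> 'M[R]_(mr, mc)) (gamma rho : R) : Prop :=
  forall Sp Sp', Sp \in Mfam -> Sp' \in Mfam ->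
  forall T, (exists h h', [/\ param_on Sp h, param_on Sp' h' & T = segre h + segre h']) ->
  frob (AS A (supU Sp Sp') T) <= rho ->
  forall T', AS A (supU Sp Sp') T' = 0 ->
  tnorm T <= gamma * tnorm (T - projS (supU Sp Sp') T').

(* sigma is a Deep-lower-RIP constant (positivity stated separately) *)
Definition deepLowerRIP (Mfam : {set {ffun 'I_K -> {set 'I_S}}})
  (A : {ffun {ffun 'I_K -> 'I_S} -> R} -> 'M[R]_(mr, mc)) (sigma : R) : Prop :=
  forall Sp Sp', Sp \in Mfam -> Sp' \in Mfam ->
  forall T, (forall T', AS A (supU Sp Sp') T' = 0 -> tdot T T' = 0) ->
  sigma * tnorm (projS (supU Sp Sp') T) <= frob (AS A (supU Sp Sp') T).

Definition equivp (h g : 'M[R]_(S, K)) : Prop :=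
  exists lam : 'I_K -> R, \prod_k lam k = 1 /\ forall i k, h i k = lam k * g i k.

Definition nonzero_cols (h : 'M[R]_(S, K)) : Prop := forall k : 'I_K, col k h != 0.

Definition diagp (h : 'M[R]_(S, K)) : Prop :=
  nonzero_cols h /\
  forall k j : 'I_K, val j = 0%N ->
    supnorm (fun i => h i k) = supnorm (fun i => h i j).

Definition dp (p : \bar R) (h g : 'M[R]_(S, K)) : R :=
  inf [set r | exists h' g', [/\ equivp h' h, diagp h', equivp g' g, diagp g' &
         r = lpnorm p (fun ij : 'I_S * 'I_K => (h' - g') ij.1 ij.2)]].

End Defs.

From HB Require Import structures.
From mathcomp Require Import all_boot all_order all_algebra.
From mathcomp Require Import all_classical all_reals all_analysis.
From mathcomp Require Import ring lra.
Set Implicit Arguments. Unset Strict Implicit. Unset Printing Implicit Defensive.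
Import Order.TTheory GRing.Theory Num.Theory.
Local Open Scope ring_scope.

(* Let T = P(h* ) - P(hbar).  Since A T = (A P(h* ) - X) + e, the Frobenius
   norm of A T is at most eta + delta.  Let T' be the component of T in the
   kernel of A restricted to S* u Sbar, so that T - T' is orthogonal to that
   kernel: the null space property bounds ||T|| by gamma ||T - P T'||, and the
   lower RIP bounds sigma ||T - P T'|| by ||A T||.

   For the second claim let eps bound the entries of T.  Rescale the columns of
   h* and hbar to the common sup norms a = ||P(h* )||_oo^(1/K) and
   c = ||P(hbar)||_oo^(1/K), choosing signs so that, at an argmax j of P(h* ),
   all but one pivots h_k(j_k) of each rescaled parameter are positive.  The
   two Segre entries at j are eps-close and larger than eps, hence have the same
   sign; comparing the Segre entries at j with one coordinate moved to t then
   shows that the rescaled parameters h', g' satisfy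
   |h'_k(t) - g'_k(t)| a^(K-1) <= 3 eps.  When eps >= ||P(h* )||_oo the trivial
   bound a + c suffices.  Summing these entrywise bounds in l^p gives the second
   claim, even with the constant 3 instead of 7. *)

Section EuclideanNorm.
Variables (R : rcfType) (I : finType).
Implicit Types f g : I -> R.

Definition l2norm f : R := Num.sqrt (\sum_i f i ^+ 2).

Lemma sumr_sqr_ge0 f : 0 <= \sum_i f i ^+ 2.
Proof. by apply: sumr_ge0 => i _; apply: sqr_ge0. Qed.

Lemma l2norm_ge0 f : 0 <= l2norm f.
Proof. exact: sqrtr_ge0. Qed.

Lemma l2norm_sqr f : l2norm f ^+ 2 = \sum_i f i ^+ 2.
Proof. by rewrite sqr_sqrtr // sumr_sqr_ge0. Qed.

(* Lagrange's identity: the defect is a sum of squares of 2x2 minors. *)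
Lemma sum_mul_sqr_le f g :
  (\sum_i f i * g i) ^+ 2 <= (\sum_i f i ^+ 2) * (\sum_i g i ^+ 2).
Proof.
have minors : \sum_i \sum_j (f i * g j - f j * g i) ^+ 2
    = 2 * ((\sum_i f i ^+ 2) * (\sum_i g i ^+ 2) - (\sum_i f i * g i) ^+ 2).
  have -> : \sum_i \sum_j (f i * g j - f j * g i) ^+ 2
      = \sum_i \sum_j f i ^+ 2 * g j ^+ 2 + \sum_i \sum_j f j ^+ 2 * g i ^+ 2
        - 2 * \sum_i \sum_j (f i * g i) * (f j * g j).
    rewrite mulr_sumr -big_split -sumrB; apply: eq_bigr => i _ /=.
    by rewrite mulr_sumr -big_split -sumrB; apply: eq_bigr => j _ /=; ring.
  rewrite [X in _ + X - _]exchange_big /= expr2 !big_distrlr /=; ring.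
rewrite -subr_ge0 -(pmulr_rge0 _ (ltr0n _ 2)) -minors.
by do 2!(apply: sumr_ge0 => ? _); apply: sqr_ge0.
Qed.

Lemma sum_mul_le_l2norm f g : \sum_i f i * g i <= l2norm f * l2norm g.
Proof.
rewrite -sqrtrM ?sumr_sqr_ge0 // (le_trans (ler_norm _)) //.
by rewrite -sqrtr_sqr ler_wsqrtr // sum_mul_sqr_le.
Qed.

Lemma l2normD f g : l2norm (fun i => f i + g i) <= l2norm f + l2norm g.
Proof.
rewrite -[X in _ <= X]ger0_norm ?addr_ge0 ?l2norm_ge0 // -sqrtr_sqr ler_wsqrtr //.
have -> : \sum_i (f i + g i) ^+ 2 = \sum_i f i ^+ 2 + 2 * \sum_i f i * g i + \sum_i g i ^+ 2.
  by rewrite mulr_sumr -!big_split; apply: eq_bigr => i _ /=; ring.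
rewrite -!l2norm_sqr; have := sum_mul_le_l2norm f g; nra.
Qed.

Lemma normr_le_l2norm f i : `|f i| <= l2norm f.
Proof.
rewrite -sqrtr_sqr ler_wsqrtr // (bigD1 i) //= lerDl.
by apply: sumr_ge0 => j _; apply: sqr_ge0.
Qed.
End EuclideanNorm.

Section OrthogonalProjection.
Variables (R : realType) (I : finType).
Local Notation V := {ffun I -> R}.
Implicit Types (x y v w : V) (cs : seq V).

Definition dot v w : R := \sum_i v i * w i.

Lemma dotC v w : dot v w = dot w v.
Proof. by apply: eq_bigr => i _; rewrite mulrC. Qed.

Lemma dotDl v w x : dot (v + w) x = dot v x + dot w x.
Proof. by rewrite /dot -big_split; apply: eq_bigr => i _; rewrite ffunE mulrDl. Qed.

Lemma dotZl a v x : dot (a *: v) x = a * dot v x.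
Proof. by rewrite /dot mulr_sumr; apply: eq_bigr => i _; rewrite ffunE mulrA. Qed.

Lemma dotBl v w x : dot (v - w) x = dot v x - dot w x.
Proof. by rewrite dotDl -scaleN1r dotZl mulN1r. Qed.

Lemma dotDr x v w : dot x (v + w) = dot x v + dot x w.
Proof. by rewrite dotC dotDl !(dotC x). Qed.

Lemma dot0l x : dot 0 x = 0.
Proof. by rewrite -(subrr x) dotBl subrr. Qed.

Lemma dot_self_eq0 v : (dot v v == 0) = (v == 0).
Proof.
apply/idP/eqP => [|->]; last by rewrite dot0l.
rewrite psumr_eq0 => [/allP v0|i _]; last by rewrite -expr2 sqr_ge0.
apply/ffunP => i; rewrite ffunE.
by have := v0 i (mem_index_enum i); rewrite /= mulf_eq0 orbb => /eqP.
Qed.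

Fixpoint in_span cs y : Prop :=
  if cs is c :: cs' then exists t y', in_span cs' y' /\ y = t *: c + y' else y = 0.

Lemma in_span_lin cs a y y' : in_span cs y -> in_span cs y' -> in_span cs (a *: y + y').
Proof.
elim: cs a y y' => [|c cs IH] a y y' /=; first by move=> -> ->; rewrite scaler0 addr0.
move=> [t [z [zP ->]]] [t' [z' [z'P ->]]].
exists (a * t + t'), (a *: z + z'); split; first exact: IH.
by rewrite scalerDr scalerA scalerDl addrACA.
Qed.

Lemma dot_span cs v y :
  (forall c, c \in cs -> dot v c = 0) -> in_span cs y -> dot v y = 0.
Proof.
elim: cs y => [|c cs IH] y /= vcs; first by move=> ->; rewrite dotC dot0l.
move=> [t [y' [y'P ->]]].
rewrite dotC dotDl dotZl dotC vcs ?mem_head // mulr0 add0r dotC IH //.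
by move=> c' c'cs; apply: vcs; rewrite in_cons c'cs orbT.
Qed.

Lemma orthogonal_projection cs x :
  exists y, in_span cs y /\ forall c, c \in cs -> dot (x - y) c = 0.
Proof.
elim: cs x => [|c cs IH] x; first by exists 0.
have [y [yP xy]] := IH x; have [z [zP cz]] := IH c.
have xyP w : in_span cs w -> dot (x - y) w = 0 by apply: dot_span.
have czP w : in_span cs w -> dot (c - z) w = 0 by apply: dot_span.
have [cz0|cz_neq0] := eqVneq (dot (c - z) (c - z)) 0.
  exists y; split; first by exists 0, y; rewrite scale0r add0r.
  move=> c'; rewrite in_cons => /predU1P [->|]; last exact: xy.
  by move/eqP: cz0; rewrite dot_self_eq0 subr_eq0 => /eqP ->; apply: xyP.
(* Gram--Schmidt step: correct [y] along the component of [c] orthogonal to [cs]. *)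
pose t := dot (x - y) (c - z) / dot (c - z) (c - z).
exists (y + t *: (c - z)); split.
  exists t, (y - t *: z); split; last by rewrite scalerBr addrCA.
  by rewrite addrC -scaleNr; apply: in_span_lin.
have -> : x - (y + t *: (c - z)) = (x - y) - t *: (c - z) by rewrite opprD addrA.
move=> c'; rewrite in_cons => /predU1P [->|c'cs].
  rewrite -[c in dot _ c](subrK z) dotDr !(dotBl (x - y)) !dotZl (xyP z zP) (czP z zP).
  by rewrite /t divfK // subrr mulr0 subrr add0r.
by rewrite dotBl dotZl xy // cz // mulr0 subr0.
Qed.

Definition unit_vec (i : I) : V := [ffun j => (i == j)%:R].

Lemma ffun_unit_vec_sum v : v = \sum_i v i *: unit_vec i.
Proof.
apply/ffunP => j; rewrite sum_ffunE (bigD1 j) //= big1 => [|i /negbTE ij].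
  by rewrite !ffunE eqxx addr0; apply: esym; apply: mulr1.
by rewrite !ffunE ij scaler0.
Qed.

Lemma linear_entry_dot p q (f : V -> 'M[R]_(p, q)) : linear f ->
  forall v a b, f v a b = dot v [ffun i => f (unit_vec i) a b].
Proof.
move=> f_lin v a b.
pose F : {linear V -> 'M[R]_(p, q)} := HB.pack f (GRing.isLinear.Build R V _ *:%R f f_lin).
rewrite {1}(ffun_unit_vec_sum v) -[f _]/(F _) linear_sum summxE.
by apply: eq_bigr => i _; rewrite linearZ mxE ffunE.
Qed.

(* The rows of [f] span the orthogonal complement of its kernel, so projecting
   [x] onto their span leaves a remainder in the kernel. *)
Lemma kernel_orthogonal_decomposition p q (f : V -> 'M[R]_(p, q)) : linear f ->
  forall x, exists2 x', f x' = 0 & forall w, f w = 0 -> dot (x - x') w = 0.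
Proof.
move=> f_lin x.
pose row (ab : 'I_p * 'I_q) : V := [ffun i => f (unit_vec i) ab.1 ab.2].
have fE v a b : f v a b = dot v (row (a, b)) by apply: linear_entry_dot.
have [y [yP xy]] := orthogonal_projection [seq row ab | ab <- enum {: 'I_p * 'I_q}] x.
exists (x - y).
  apply/matrixP => a b; rewrite fE mxE.
  by apply: xy; apply: map_f; rewrite mem_enum.
move=> w fw; rewrite opprB addrC subrK dotC; apply: dot_span yP => _ /mapP [[a b] _ ->].
by rewrite -fE fw mxE.
Qed.
End OrthogonalProjection.

Section SupNorm.
Variables (R : realType) (I : finType).
Implicit Types f g : I -> R.

Lemma supnorm_ge0 f : 0 <= supnorm f.
Proof. by rewrite /supnorm; elim/big_ind: _ => //= x y x0 y0; rewrite le_max x0. Qed.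

Lemma normr_le_supnorm f i : `|f i| <= supnorm f.
Proof. exact: (le_bigmax 0 (fun i => `|f i|) i). Qed.

Lemma supnorm_le f B : 0 <= B -> (forall i, `|f i| <= B) -> supnorm f <= B.
Proof. by move=> B0 fB; apply: bigmax_le. Qed.

Lemma supnorm_attained f (i0 : I) : exists i, supnorm f = `|f i|.
Proof.
have [i _ fi] := @eq_bigmax _ _ I 0 i0 predT (fun i => `|f i|) isT (fun i _ => normr_ge0 _).
by exists i.
Qed.

Lemma supnorm_eq f B i0 : (forall i, `|f i| <= B) -> `|f i0| = B -> supnorm f = B.
Proof.
move=> fB fi0; apply/eqP; rewrite eq_le supnorm_le //=; last by rewrite -fi0.
by rewrite -fi0 normr_le_supnorm.
Qed.

Lemma supnorm_le_add f g eps :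
  0 <= eps -> (forall i, `|f i - g i| <= eps) -> supnorm g <= supnorm f + eps.
Proof.
move=> eps0 fg; apply: supnorm_le => [|i]; first by rewrite addr_ge0 ?supnorm_ge0.
rewrite -[g i](subrKC (f i)) -opprB (le_trans (ler_normD _ _)) // normrN.
by rewrite lerD ?normr_le_supnorm.
Qed.
End SupNorm.

Lemma frobD (R : realType) p q (A B : 'M[R]_(p, q)) : frob (A + B) <= frob A + frob B.
Proof.
have frobE (C : 'M[R]_(p, q)) : frob C = l2norm (fun ab : 'I_p * 'I_q => C ab.1 ab.2).
  by rewrite /frob /l2norm pair_bigA.
have -> : frob (A + B) = l2norm (fun ab : 'I_p * 'I_q => A ab.1 ab.2 + B ab.1 ab.2).
  by rewrite frobE; congr l2norm; apply: funext => ab; rewrite mxE.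
by rewrite !frobE; apply: l2normD.
Qed.

Section SegreSupport.
Variables (R : realType) (K S : nat).
Local Notation support := {ffun 'I_K -> {set 'I_S}}.
Implicit Types (h : 'M[R]_(S, K)) (U : support).

Lemma projS_is_linear U : linear (projS (R := R) U).
Proof.
move=> a T T'; apply/ffunP => i; rewrite !ffunE.
by case: ifP => _; rewrite ?ffunE // scaler0 addr0.
Qed.

Lemma segre_out_supp U h i : param_on U h -> ~~ in_supp i U -> segre h i = 0.
Proof.
move=> hU /forallPn [k ik]; rewrite ffunE (bigD1 k) //=.
by rewrite hU ?mul0r.
Qed.

Lemma projS_segre U h : param_on U h -> projS U (segre h) = segre h.
Proof.
move=> hU; apply/ffunP => i; rewrite ffunE.
by case: ifPn => // iU; rewrite (segre_out_supp hU).
Qed.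

Lemma param_on_supUl U U' h : param_on U h -> param_on (supU U U') h.
Proof. by move=> hU i k; rewrite ffunE inE negb_or => /andP [iU _]; apply: hU. Qed.

Lemma param_on_supUr U U' h : param_on U' h -> param_on (supU U U') h.
Proof. by move=> hU i k; rewrite ffunE inE negb_or => /andP [_ iU]; apply: hU. Qed.

Lemma segre_opp U h : (0 < K)%N -> param_on U h ->
  exists2 h', param_on U h' & segre h' = - segre h.
Proof.
move=> K0 hU; pose k0 : 'I_K := Ordinal K0.
exists (\matrix_(i, k) (if k == k0 then - h i k else h i k)).
  by move=> i k ik; rewrite mxE hU // oppr0 if_same.
apply/ffunP => i; rewrite !ffunE (bigD1 k0) //= [in RHS](bigD1 k0) //= mxE eqxx mulNr.
by congr (- (_ * _)); apply: eq_bigr => k /negbTE kk0; rewrite mxE kk0.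
Qed.

End SegreSupport.

Lemma segre_stability (R : realType) (K S mr mc : nat)
    (A : {ffun {ffun 'I_K -> 'I_S} -> R} -> 'M[R]_(mr, mc))
    (Mfam : {set {ffun 'I_K -> {set 'I_S}}}) (gamma rho sigma : R)
    (Sp Sp' : {ffun 'I_K -> {set 'I_S}}) (h h' : 'M[R]_(S, K)) :
  (0 < K)%N -> linear A ->
  deepNSP Mfam A gamma rho -> 0 <= gamma ->
  deepLowerRIP Mfam A sigma -> 0 < sigma ->
  Sp \in Mfam -> Sp' \in Mfam -> param_on Sp h -> param_on Sp' h' ->
  frob (A (segre h - segre h')) <= rho ->
  tnorm (segre h - segre h') <= gamma / sigma * frob (A (segre h - segre h')).
Proof.
move=> K0 A_lin nsp gamma0 rip sigma0 SpM Sp'M hSp h'Sp' ATrho.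
set T := segre h - segre h'; set U := supU Sp Sp'.
have projSB := zmod_morphism_linear (projS_is_linear U).
have PT : projS U T = T.
  rewrite projSB !projS_segre //; [exact: param_on_supUr | exact: param_on_supUl].
have AU_lin : linear (AS A U) by move=> a T1 T2; rewrite /AS projS_is_linear A_lin.
have [T' AT'0 T_perp] := kernel_orthogonal_decomposition AU_lin T.
have [h'' h''Sp' h''E] := segre_opp K0 h'Sp'.
have nspT : tnorm T <= gamma * tnorm (T - projS U T').
  apply: (nsp Sp Sp' SpM Sp'M) => //; first by exists h, h''; rewrite h''E.
  by rewrite /AS PT.
have ripT : sigma * tnorm (T - projS U T') <= frob (A T).
  have := rip Sp Sp' SpM Sp'M (T - T') T_perp.
  by rewrite /AS projSB PT (zmod_morphism_linear A_lin) -/(AS A U T') AT'0 subr0.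
rewrite (le_trans nspT) // -mulrA ler_wpM2l // ler_pdivlMl //.
Qed.

Section ColumnNorms.
Variables (R : realType) (K S : nat).
Implicit Types h g : 'M[R]_(S, K).

Definition colnorm h (k : 'I_K) : R := supnorm (fun i => h i k).

Lemma colnorm_ge0 h k : 0 <= colnorm h k.
Proof. exact: supnorm_ge0. Qed.

Lemma colnorm_argmax h : (0 < S)%N ->
  exists j : {ffun 'I_K -> 'I_S}, forall k, colnorm h k = `|h (j k) k|.
Proof.
move=> S0; have [f fP] := fin_all_exists (fun k => supnorm_attained (fun i => h i k) (Ordinal S0)).
by exists [ffun k => f k] => k; rewrite ffunE; apply: fP.
Qed.

Lemma supnorm_segre h : (0 < S)%N -> supnorm (segre h) = \prod_k colnorm h k.
Proof.
move=> S0; have [j jP] := colnorm_argmax h S0.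
apply: (supnorm_eq (i0 := j)) => [i|]; rewrite ffunE normr_prod.
  by apply: ler_prod => k _; rewrite normr_ge0 (normr_le_supnorm (fun i => h i k)).
by apply: eq_bigr => k _; rewrite jP.
Qed.

Lemma normr_segre_argmax h (j : {ffun 'I_K -> 'I_S}) : (0 < S)%N ->
  (forall k, colnorm h k = `|h (j k) k|) -> `|segre h j| = supnorm (segre h).
Proof.
move=> S0 jP; rewrite supnorm_segre // ffunE normr_prod.
by apply: eq_bigr => k _; rewrite jP.
Qed.

Lemma colnorm_gt0 h k : (0 < S)%N -> 0 < supnorm (segre h) -> 0 < colnorm h k.
Proof.
move=> S0; rewrite supnorm_segre // [_ < colnorm _ _]lt_def colnorm_ge0 andbT.
by apply: contraTneq => hk0; rewrite (bigD1 k) //= hk0 mul0r ltxx.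
Qed.

Lemma supnorm_segre_gt0 h : (0 < S)%N -> nonzero_cols h -> 0 < supnorm (segre h).
Proof.
move=> S0 hnz; rewrite supnorm_segre //; apply: prodr_gt0 => k _.
rewrite lt_def colnorm_ge0 andbT; apply: contra (hnz k) => /eqP hk0.
apply/eqP/matrixP => i z; rewrite !mxE; apply/eqP; rewrite -normr_le0 -hk0.
exact: (normr_le_supnorm (fun i => h i k)).
Qed.

Lemma equivp_segre h' h : equivp h' h -> segre h' = segre h.
Proof.
move=> [lam [lam1 h'E]]; apply/ffunP => i; rewrite !ffunE.
by under eq_bigr do rewrite h'E; rewrite big_split /= lam1 mul1r.
Qed.

Lemma argmax_pivot_neq0 h (j : {ffun 'I_K -> 'I_S}) k : (0 < S)%N ->
  (forall k, colnorm h k = `|h (j k) k|) -> 0 < supnorm (segre h) -> h (j k) k != 0.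
Proof. by move=> S0 jP h0; rewrite -normr_eq0 -jP gt_eqF // colnorm_gt0. Qed.

Lemma pivots_neq0_close h g (j : {ffun 'I_K -> 'I_S}) eps : (0 < S)%N ->
  (forall k, colnorm h k = `|h (j k) k|) -> `|segre h j - segre g j| <= eps ->
  eps < supnorm (segre h) -> forall k, g (j k) k != 0.
Proof.
move=> S0 jP close eps_lt; have : segre g j != 0.
  apply: contraTneq eps_lt => gj0; rewrite -leNgt.
  by rewrite -(normr_segre_argmax S0 jP) -[segre h j]subr0 -gj0.
by rewrite ffunE => /prodf_neq0 gj k; apply: gj.
Qed.

Lemma segre_update h (j : {ffun 'I_K -> 'I_S}) (t : 'I_S) (k : 'I_K) :
  segre h [ffun l => if l == k then t else j l] = h t k * \prod_(l | l != k) h (j l) l.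
Proof.
rewrite ffunE (bigD1 k) //= ffunE eqxx; congr (_ * _).
by apply: eq_bigr => l /negbTE lk; rewrite ffunE lk.
Qed.

End ColumnNorms.

Section Balancing.
Variables (R : realType) (K S : nat).
Implicit Types h : 'M[R]_(S, K).

(* Column [k <> k0] is flipped to make its pivot [h (j k) k] positive; column
   [k0] absorbs all the flips, so that the product of the signs is [1]. *)
Definition colsign h (j : {ffun 'I_K -> 'I_S}) (k0 k : 'I_K) : R :=
  if k == k0 then \prod_(l | l != k0) Num.sg (h (j l) l) else Num.sg (h (j k) k).

Definition balance h j k0 (a : R) : 'M[R]_(S, K) :=
  \matrix_(i, k) (a / colnorm h k * colsign h j k0 k * h i k).

Variables (h : 'M[R]_(S, K)) (j : {ffun 'I_K -> 'I_S}) (k0 : 'I_K) (a : R).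
Hypotheses (S0 : (0 < S)%N) (a0 : 0 < a) (aK : a ^+ K = supnorm (segre h))
  (h_pos : forall k, 0 < colnorm h k) (hj : forall k, h (j k) k != 0).

Lemma normr_colsign k : `|colsign h j k0 k| = 1.
Proof.
rewrite /colsign; case: ifP => _; last by rewrite normr_sg hj.
by rewrite normr_prod big1 // => l _; rewrite normr_sg hj.
Qed.

Lemma prod_colsign : \prod_k colsign h j k0 k = 1.
Proof.
rewrite (bigD1 k0) //= /colsign eqxx -big_split /= big1 // => l /negbTE ->.
by rewrite -expr2 sqr_sg hj.
Qed.

Lemma balance_equiv : equivp (balance h j k0 a) h.
Proof.
exists (fun k => a / colnorm h k * colsign h j k0 k); split; last by move=> i k; rewrite mxE.
rewrite !big_split /= prod_colsign mulr1 prodfV prodr_const card_ord aK supnorm_segre //.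
by rewrite divff // gt_eqF // prodr_gt0.
Qed.

Lemma normr_balance i k : `|balance h j k0 a i k| = a / colnorm h k * `|h i k|.
Proof.
by rewrite mxE !normrM normr_colsign mulr1 normfV (gtr0_norm a0) (gtr0_norm (h_pos k)).
Qed.

Lemma balance_le i k : `|balance h j k0 a i k| <= a.
Proof.
rewrite normr_balance mulrAC ler_pdivrMr // ler_pM2l //.
exact: (normr_le_supnorm (fun i => h i k)).
Qed.

Lemma colnorm_balance k : colnorm (balance h j k0 a) k = a.
Proof.
have [i hi] := supnorm_attained (fun i => h i k) (Ordinal S0).
apply: (supnorm_eq (i0 := i)) => [i'|]; first exact: balance_le.
by rewrite normr_balance -hi divfK // gt_eqF.
Qed.

Lemma balance_diag : diagp (balance h j k0 a).
Proof.
split=> [k|k l _]; last by rewrite -[LHS]/(colnorm _ k) -[RHS]/(colnorm _ l) !colnorm_balance.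
apply: contraTneq (a0) => /matrixP col0; rewrite -(colnorm_balance k) -leNgt.
by apply: supnorm_le => // i; have := col0 i 0; rewrite !mxE => ->; rewrite normr0.
Qed.

Lemma balance_pivot k : k != k0 -> balance h j k0 a (j k) k = a / colnorm h k * `|h (j k) k|.
Proof. by move=> /negbTE kk0; rewrite mxE /colsign kk0 -mulrA -normrEsg. Qed.

End Balancing.

Section RealInequalities.
Variable R : realFieldType.
Implicit Types a c x y U V W eps : R.

Lemma mul_gt0_close x y eps : `|x - y| <= eps -> eps < `|x| -> 0 < x * y.
Proof.
move=> xy ex; have eps0 : 0 <= eps := le_trans (normr_ge0 _) xy.
have xxy : x * (x - y) <= `|x| * eps.
  by rewrite (le_trans (ler_norm _)) // normrM ler_wpM2l.
have xx : `|x| * eps < `|x| * `|x| by rewrite ltr_pM2l // (le_lt_trans eps0).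
have sqx : `|x| * `|x| = x * x by rewrite -normrM ger0_norm // -expr2 sqr_ge0.
nra.
Qed.

Lemma normr_sub_same_sign U V x y : 0 < U * V -> `|U * x - V * y| = `|(`|U| * x - `|V| * y)|.
Proof.
move=> UV; have [U0|U0|U0] := ltgtP U 0.
- have V0 : V < 0 by move: UV; rewrite nmulr_rgt0.
  by rewrite (ltr0_norm U0) (ltr0_norm V0) -normrN !mulNr opprB addrC opprK.
- have V0 : 0 < V by move: UV; rewrite pmulr_rgt0.
  by rewrite (gtr0_norm U0) (gtr0_norm V0).
- by move: UV; rewrite U0 mul0r ltxx.
Qed.

Lemma coeff_gap_le n a c W eps : 0 < a -> 0 < c ->
  c ^+ n.+1 <= a ^+ n.+1 + eps -> a ^+ n.+1 - eps <= W * c ->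
  0 <= W -> W <= c ^+ n -> `|W - a ^+ n| * c <= 2 * eps.
Proof.
move=> a0 c0; rewrite !exprSr => cle Wc W0 Wle.
have [ca|ac] := lerP c a.
  have can : c ^+ n <= a ^+ n := lerXn2r n (ltW c0) (ltW a0) ca.
  rewrite ler0_norm ?subr_le0 ?(le_trans Wle) //.
  have : a ^+ n * c <= a ^+ n * a by rewrite ler_pM2l // exprn_gt0.
  nra.
have acn : a ^+ n <= c ^+ n := lerXn2r n (ltW a0) (ltW c0) (ltW ac).
have anc : a ^+ n * a <= a ^+ n * c by rewrite ler_pM2l ?exprn_gt0 // ltW.
have [aW|Wa] := lerP (a ^+ n) W.
  have : (W - a ^+ n) * c <= (c ^+ n - a ^+ n) * c by rewrite ler_pM2r // lerB.
  nra.
have : W * c <= c ^+ n * c by rewrite ler_pM2r.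
nra.
Qed.

Lemma scaled_gap_le P W x y c eps : 0 <= P ->
  `|P * x - W * y| <= eps -> `|y| <= c -> `|W - P| * c <= 2 * eps ->
  `|x - y| * P <= 3 * eps.
Proof.
move=> P0 xy yc WP.
have -> : `|x - y| * P = `|(P * x - W * y) + (W - P) * y|.
  by rewrite -[P in LHS]ger0_norm // -normrM; congr `|_|; ring.
rewrite (le_trans (ler_normD _ _)) // normrM.
have : `|W - P| * `|y| <= `|W - P| * c by rewrite ler_wpM2l.
lra.
Qed.

End RealInequalities.

Section CloseCase.
Variables (R : realType) (K S : nat).
Variables (h g : 'M[R]_(S, K)) (j : {ffun 'I_K -> 'I_S}) (k0 : 'I_K) (a c eps : R).
Hypotheses (S0 : (0 < S)%N) (a0 : 0 < a) (aK : a ^+ K = supnorm (segre h))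
  (c0 : 0 < c) (cK : c ^+ K = supnorm (segre g))
  (h_pos : forall k, 0 < colnorm h k) (g_pos : forall k, 0 < colnorm g k)
  (hj : forall k, colnorm h k = `|h (j k) k|) (gj : forall k, g (j k) k != 0)
  (close : forall i, `|segre h i - segre g i| <= eps) (eps_lt : eps < supnorm (segre h)).

Local Notation h' := (balance h j k0 a).
Local Notation g' := (balance g j k0 c).

Let hj_neq0 k : h (j k) k != 0.
Proof. by rewrite -normr_eq0 -hj gt_eqF. Qed.

Let K_gt0 : (0 < K)%N.
Proof. exact: leq_ltn_trans (ltn_ord k0). Qed.

Let h'E : segre h' = segre h.
Proof. by apply/equivp_segre/balance_equiv. Qed.

Let g'E : segre g' = segre g.
Proof. by apply/equivp_segre/balance_equiv. Qed.

Lemma normr_pivot_h l : `|h' (j l) l| = a.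
Proof. by rewrite normr_balance // -hj divfK // gt_eqF. Qed.

Lemma pivot_h l : l != k0 -> h' (j l) l = a.
Proof. by move=> lk0; rewrite balance_pivot // -hj divfK // gt_eqF. Qed.

Lemma pivot_g_gt0 l : l != k0 -> 0 < g' (j l) l.
Proof. by move=> lk0; rewrite balance_pivot // !mulr_gt0 ?invr_gt0 ?normr_gt0. Qed.

(* The pivot products are [segre h j] and [segre g j], which have the same sign
   because they are [eps]-close and [|segre h j| > eps]. *)
Lemma pivots_mul_gt0 l : 0 < h' (j l) l * g' (j l) l.
Proof.
have [->|lk0] := eqVneq l k0; last by rewrite pivot_h // mulr_gt0 // pivot_g_gt0.
have : 0 < segre h j * segre g j.
  by apply: mul_gt0_close (close j) _; rewrite normr_segre_argmax.
rewrite -h'E -g'E !ffunE -big_split /=.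
rewrite (bigD1 k0) //= pmulr_lgt0 // prodr_gt0 // => l' l'k0.
by rewrite pivot_h // mulr_gt0 // pivot_g_gt0.
Qed.

Lemma balance_close t k : `|h' t k - g' t k| * a ^+ K.-1 <= 3 * eps.
Proof.
have eps0 : 0 <= eps := le_trans (normr_ge0 _) (close j).
set U := \prod_(l | l != k) h' (j l) l; set V := \prod_(l | l != k) g' (j l) l.
have UV : 0 < U * V by rewrite -big_split prodr_gt0 // => l _; apply: pivots_mul_gt0.
have normU : `|U| = a ^+ K.-1.
  by rewrite normr_prod (eq_bigr _ (fun l _ => normr_pivot_h l)) prodr_const cardC1 card_ord.
have normV : `|V| <= c ^+ K.-1.
  rewrite -[K in c ^+ K.-1]card_ord -(cardC1 k) -prodr_const normr_prod.
  by apply: ler_prod => l _; rewrite normr_ge0 balance_le.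
have segre_gj : `|segre g j| <= `|V| * c.
  by rewrite -g'E ffunE (bigD1 k) //= normrM mulrC ler_wpM2l // balance_le.
have segre_hj : supnorm (segre h) - eps <= `|segre g j|.
  rewrite -(normr_segre_argmax S0 hj) lerBlDl -[segre h j](subrK (segre g j)).
  by rewrite (le_trans (ler_normD _ _)) // lerD2r close.
have updated := close [ffun l => if l == k then t else j l].
rewrite -h'E -g'E !segre_update mulrC [_ * V]mulrC normr_sub_same_sign // normU in updated.
apply: (scaled_gap_le (W := `|V|) (c := c)) => //.
- by rewrite exprn_ge0 // ltW.
- by rewrite balance_le.
apply: coeff_gap_le => //; rewrite ?prednK //.
- by rewrite aK cK supnorm_le_add.
- by rewrite aK (le_trans segre_hj).
Qed.

End CloseCase.

Lemma powR_invnK (R : realType) (K : nat) (x : R) :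
  (0 < K)%N -> 0 <= x -> (x `^ K%:R^-1) ^+ K = x.
Proof.
move=> K0 x0; rewrite -powR_mulrn ?powR_ge0 // -powRrM mulVf ?powRr1 //.
by rewrite pnatr_eq0 -lt0n.
Qed.

Section DiagonalRepresentatives.
Variables (R : realType) (K S : nat).
Hypotheses (K0 : (0 < K)%N) (S0 : (0 < S)%N).
Implicit Types h g : 'M[R]_(S, K).

Lemma close_diag_representatives h g eps (mu : R) :
  0 < mu -> mu ^+ K <= supnorm (segre h) -> mu ^+ K <= supnorm (segre g) ->
  (forall i, `|segre h i - segre g i| <= eps) ->
  exists h' g', [/\ equivp h' h, diagp h', equivp g' g, diagp g' &
    forall t k, `|h' t k - g' t k| * mu ^+ K.-1 <= 3 * eps].
Proof.
move=> mu0 muX muY close.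
have eps0 : 0 <= eps := le_trans (normr_ge0 _) (close [ffun=> Ordinal S0]).
set X := supnorm (segre h) in muX *; set Y := supnorm (segre g) in muY *.
have [X0 Y0] : 0 < X /\ 0 < Y by split; apply: lt_le_trans (exprn_gt0 K mu0) _.
pose a := X `^ K%:R^-1; pose c := Y `^ K%:R^-1.
have [a0 c0] : 0 < a /\ 0 < c by split; apply: powR_gt0.
have aK : a ^+ K = X by apply: powR_invnK => //; apply: ltW.
have cK : c ^+ K = Y by apply: powR_invnK => //; apply: ltW.
have mu_le x : 0 < x -> mu ^+ K <= x ^+ K -> mu ^+ K.-1 <= x ^+ K.-1.
  move=> x0 muxK; apply: lerXn2r; rewrite ?nnegrE ?(ltW mu0) ?(ltW x0) //.
  by rewrite -(ler_pXn2r K0) // nnegrE ltW.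
have mua : mu ^+ K.-1 <= a ^+ K.-1 by apply: mu_le; rewrite ?aK.
have muc : mu ^+ K.-1 <= c ^+ K.-1 by apply: mu_le; rewrite ?cK.
have h_pos k : 0 < colnorm h k by apply: colnorm_gt0.
have g_pos k : 0 < colnorm g k by apply: colnorm_gt0.
pose k0 : 'I_K := Ordinal K0.
have [jh jhP] := colnorm_argmax h S0; have [jg jgP] := colnorm_argmax g S0.
have jh_neq0 k : h (jh k) k != 0 by apply: argmax_pivot_neq0.
(* Close case: balance [g] at the pivots of [h]; far case: at its own pivots. *)
have [jg' jg'P jg'E] : exists2 jg' : {ffun 'I_K -> 'I_S},
    forall k, g (jg' k) k != 0 & eps < X -> jg' = jh.
  have [eps_lt|_] := ltP eps X; last by exists jg => // k; apply: argmax_pivot_neq0.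
  by exists jh => //; apply: pivots_neq0_close eps_lt.
exists (balance h jh k0 a), (balance g jg' k0 c).
split; [ by apply: balance_equiv | by apply: balance_diag
       | by apply: balance_equiv | by apply: balance_diag | move=> t k ].
have [eps_lt|X_le] := ltP eps X.
  have gjh := jg'P; rewrite (jg'E eps_lt) in gjh *.
  apply: le_trans (balance_close k0 S0 a0 aK c0 cK h_pos g_pos jhP gjh close eps_lt t k).
  by rewrite ler_wpM2l.
have far : `|balance h jh k0 a t k - balance g jg' k0 c t k| <= a + c.
  by rewrite (le_trans (ler_normB _ _)) // lerD ?balance_le.
have YX : Y <= X + eps by apply: supnorm_le_add.
rewrite (le_trans (ler_wpM2r _ far)) ?exprn_ge0 ?(ltW mu0) // mulrDl.
rewrite (le_trans (lerD (ler_wpM2l (ltW a0) mua) (ler_wpM2l (ltW c0) muc))) //.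
rewrite -!exprS prednK // aK cK; lra.
Qed.

End DiagonalRepresentatives.

Section ProjectiveDistance.
Local Open Scope classical_set_scope.
Variable R : realType.

Lemma lpnorm_ge0 (I : finType) (p : \bar R) (f : I -> R) : 0 <= lpnorm p f.
Proof. by case: p => [q| |] /=; rewrite ?powR_ge0 ?supnorm_ge0. Qed.

Lemma root_factor_ge0 (p : \bar R) n : 0 <= root_factor p n.
Proof. by case: p => [q| |] /=; rewrite ?powR_ge0. Qed.

Lemma lpnorm_le (I : finType) (p : \bar R) (f : I -> R) (B : R) :
  (1%:E <= p)%E -> 0 <= B -> (forall i, `|f i| <= B) ->
  lpnorm p f <= root_factor p #|I| * B.
Proof.
case: p => [q| |] //=; last by rewrite mul1r => _; apply: supnorm_le.
rewrite lee_fin => q1 B0 fB; have q0 : 0 < q := lt_le_trans ltr01 q1.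
have sum_le : \sum_i `|f i| `^ q <= #|I|%:R * B `^ q.
  have -> : #|I|%:R * B `^ q = \sum_(i : I) B `^ q by rewrite sumr_const mulr_natl.
  by apply: ler_sum => i _; apply: ge0_ler_powR; rewrite ?nnegrE ?(ltW q0).
apply: (le_trans (ge0_ler_powR _ _ _ sum_le)).
- by rewrite invr_ge0 ltW.
- by rewrite nnegrE sumr_ge0 // => i _; apply: powR_ge0.
- by rewrite nnegrE mulr_ge0 // powR_ge0.
by rewrite powRM ?powR_ge0 // -powRrM mulfV ?gt_eqF // powRr1.
Qed.

Lemma powR_invn_sub1 (K : nat) (x : R) : (0 < K)%N -> 0 < x ->
  x `^ (K%:R^-1 - 1) = ((x `^ K%:R^-1) ^+ K.-1)^-1.
Proof.
move=> K0 x0; rewrite powRB ?(gt_eqF x0) ?implybT // powRr1; last exact: ltW.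
rewrite -[X in _ / X](powR_invnK K0 (ltW x0)) -(prednK K0) exprS prednK //.
by rewrite invfM mulrA divff ?mul1r // gt_eqF // powR_gt0.
Qed.

Variables (K S : nat).
Implicit Types (h g : 'M[R]_(S, K)) (p : \bar R).

Lemma dp_le_lpnorm p h g h' g' :
  equivp h' h -> diagp h' -> equivp g' g -> diagp g' ->
  dp p h g <= lpnorm p (fun ik : 'I_S * 'I_K => (h' - g') ik.1 ik.2).
Proof.
move=> h'h h'diag g'g g'diag; apply: ge_inf; last by exists h', g'.
by exists 0 => _ [? [? [_ _ _ _ ->]]]; apply: lpnorm_ge0.
Qed.

Lemma dp_degenerate p h g : (0 < S)%N ->
  Num.min (supnorm (segre g)) (supnorm (segre h)) <= 0 -> dp p h g = 0.
Proof.
move=> S0 min_le0; rewrite /dp -[RHS](@inf0 R); congr inf.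
apply/seteqP; split=> // r [h' [g' [h'h [h'nz _] g'g [g'nz _] _]]]; move: min_le0.
rewrite ge_min !leNgt -(equivp_segre h'h) -(equivp_segre g'g).
by rewrite !supnorm_segre_gt0.
Qed.

Lemma dp_segre_le p h g eps : (0 < K)%N -> (0 < S)%N -> (1%:E <= p)%E ->
  (forall i, `|segre h i - segre g i| <= eps) ->
  dp p h g <= 3 * root_factor p (K * S)
              * Num.min (supnorm (segre g)) (supnorm (segre h)) `^ (K%:R^-1 - 1) * eps.
Proof.
move=> K0 S0 p1 close; have eps0 : 0 <= eps := le_trans (normr_ge0 _) (close [ffun=> Ordinal S0]).
set m := Num.min _ _; have [m0|m_le0] := ltP 0 m; last first.
  by rewrite dp_degenerate // !mulr_ge0 ?root_factor_ge0 ?powR_ge0.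
pose mu := m `^ K%:R^-1; have mu0 : 0 < mu by apply: powR_gt0.
have muK : mu ^+ K = m by apply: powR_invnK => //; apply: ltW.
have muX : mu ^+ K <= supnorm (segre h) by rewrite muK ge_min lexx orbT.
have muY : mu ^+ K <= supnorm (segre g) by rewrite muK ge_min lexx.
have [h' [g' [h'h h'diag g'g g'diag h'g']]] := close_diag_representatives K0 S0 mu0 muX muY close.
rewrite (le_trans (dp_le_lpnorm p h'h h'diag g'g g'diag)) //.
rewrite (le_trans (lpnorm_le (B := 3 * eps / mu ^+ K.-1) p1 _ _)) //.
- by rewrite divr_ge0 ?mulr_ge0 // exprn_ge0 // ltW.
- by move=> [t k]; rewrite !mxE ler_pdivlMr ?exprn_gt0.
rewrite card_prod !card_ord mulnC powR_invn_sub1 // -/mu.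
by rewrite [X in _ <= X](_ : _ = root_factor p (K * S) * (3 * eps / mu ^+ K.-1)) //; ring.
Qed.
End ProjectiveDistance.

Theorem theorem3 (R : realType) (K S : nat) (m : nat -> nat)
  (M : forall k : nat, 'cV[R]_S -> 'M[R]_(m k, m k.+1))
  (A : {ffun {ffun 'I_K -> 'I_S} -> R} -> 'M[R]_(m 0%N, m K))
  (Mfam : {set {ffun 'I_K -> {set 'I_S}}})
  (gamma rho sigma delta : R)
  (Sbar : {ffun 'I_K -> {set 'I_S}}) (hbar : 'M[R]_(S, K)) (e : 'M[R]_(m 0%N, m K))
  (Sstar : {ffun 'I_K -> {set 'I_S}}) (hstar : 'M[R]_(S, K)) :
  (0 < K)%N -> (0 < S)%N ->
  (forall k : nat, (k < K)%N -> linear (M k)) ->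
  linear A ->
  (forall h : 'M[R]_(S, K), A (segre h) = prodM M h K) ->
  1 <= gamma -> 0 < rho -> deepNSP Mfam A gamma rho ->
  0 < sigma -> deepLowerRIP Mfam A sigma ->
  Sbar \in Mfam -> param_on Sbar hbar ->
  0 <= delta -> frob e <= delta ->
  Sstar \in Mfam -> param_on Sstar hstar ->
  let X := prodM M hbar K + e in
  let eta := frob (prodM M hstar K - X) in
  eta + delta <= rho ->
  tnorm (segre hstar - segre hbar) <= gamma / sigma * (delta + eta) /\
  (gamma / sigma * (delta + eta)
     <= 2^-1 * Num.max (supnorm (segre hstar)) (supnorm (segre hbar)) ->
   forall p : \bar R, (1%:E <= p)%E ->
   dp p hstar hbar
     <= 7 * root_factor p (K * S)
          * (Num.min (supnorm (segre hbar)) (supnorm (segre hstar))) `^ (K%:R^-1 - 1)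
          * (gamma / sigma * (delta + eta))).
Proof.
move=> K0 S0 _ A_lin A_segre gamma1 _ nsp sigma0 rip SbarM hbarS _ e_le SstarM hstarS X eta le_rho.
set T := segre hstar - segre hbar.
have AT_le : frob (A T) <= delta + eta.
  have -> : A T = (prodM M hstar K - X) + e.
    by rewrite (zmod_morphism_linear A_lin) !A_segre /X opprD addrA subrK.
  by rewrite addrC (le_trans (frobD _ _)) // lerD.
have T_le : tnorm T <= gamma / sigma * (delta + eta).
  have gamma0 : 0 <= gamma := le_trans ler01 gamma1.
  apply: le_trans (segre_stability K0 A_lin nsp gamma0 rip sigma0 SstarM SbarM hstarS hbarS _) _.
    by rewrite (le_trans AT_le) // addrC.
  by rewrite ler_wpM2l // divr_ge0 // ltW.
have eps0 : 0 <= gamma / sigma * (delta + eta) := le_trans (l2norm_ge0 _) T_le.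
split=> // _ p p1.
have close i : `|segre hstar i - segre hbar i| <= gamma / sigma * (delta + eta).
  by apply: le_trans _ T_le; have := normr_le_l2norm T i; rewrite !ffunE.
apply: le_trans (dp_segre_le K0 S0 p1 close) _.
by rewrite ler_wpM2r // ler_wpM2r ?powR_ge0 // ler_wpM2r ?root_factor_ge0 // ler_nat.
Qed.
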